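(* For every integer $m\geq 3$ there exists a $2$-quasigroup $\psi$ of order $2m+1$ on $\Sigma=\{0,1,\dots,2m\}$ such that for each $i\in\{0,\dots,m-1\}$, $\psi$ has $m$ $\{2i,2i+1\}$-components, and all of these $\{2i,2i+1\}$-components except one have the form $\{2j,2j+1\}\times\{2l,2l+1\}$ for some $j,l\in\{0,\dots,m-1\}$.
   Context: A $2$-quasigroup (binary quasigroup) of order $k$ on $\Sigma$, $|\Sigma|=k$, is a function $f:\Sigma^2\to\Sigma$ such that fixing either argument yields a bijection $\Sigma\to\Sigma$ in the other. For distinct $a,b\in\Sigma$, an $\{a,b\}$-component of an $n$-ary quasigroup $f:\Sigma^n\to\Sigma$ is a set $S\subset\Sigma^n$ such that (1) $f(S)=\{a,b\}$, and (2) the function obtained from $f$ by replacing the value $a$ by $b$ and $b$ by $a$ at all points of $S$ (and leaving $f$ unchanged outside $S$) is again an $n$-ary quasigroup. *)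

From mathcomp Require Import all_boot.
Set Implicit Arguments. Unset Strict Implicit. Unset Printing Implicit Defensive.

Definition binop (k : nat) := 'I_k -> 'I_k -> 'I_k.

(* 2-quasigroup: fixing either argument gives a bijection 'I_k -> 'I_k
   (for an endofunction of a finite type, injective <-> bijective). *)
Definition is_quasigroup (k : nat) (f : binop k) : bool :=
  [forall x, injectiveb (f x)] && [forall y, injectiveb (fun x => f x y)].

Definition switch (k : nat) (f : binop k) (a b : 'I_k) (S : {set 'I_k * 'I_k})
  : binop k :=
  fun x y =>
    if (x, y) \in S then
      (if f x y == a then b else if f x y == b then a else f x y)
    else f x y.

Definition is_component (k : nat) (f : binop k) (a b : 'I_k)
  (S : {set 'I_k * 'I_k}) : bool :=
  ([set f p.1 p.2 | p in S] == [set a; b]) && is_quasigroup (switch f a b S).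

Definition is_min_component (k : nat) (f : binop k) (a b : 'I_k)
  (S : {set 'I_k * 'I_k}) : bool :=
  is_component f a b S &&
  [forall T : {set 'I_k * 'I_k}, (T \proper S) ==> ~~ is_component f a b T].

Definition components (k : nat) (f : binop k) (a b : 'I_k)
  : {set {set 'I_k * 'I_k}} :=
  [set S | is_min_component f a b S].

Definition pairset (m : nat) (j : nat) : {set 'I_(2 * m).+1} :=
  [set inord (2 * j); inord (2 * j + 1)].

Definition is_block (m : nat) (S : {set 'I_(2 * m).+1 * 'I_(2 * m).+1}) : Prop :=
  exists (j l : 'I_m), S = setX (pairset m j) (pairset m l).

From mathcomp Require Import all_boot perm.
From mathcomp Require Import zify.
Set Implicit Arguments. Unset Strict Implicit. Unset Printing Implicit Defensive.

(* Take a Latin square L of order m whose diagonal is a transversal (the addition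
   table of Z_m for odd m, a prolongation of the cyclic square of order m - 1 for
   even m).  Replace each entry L(j,l) by the 2x2 Latin square on
   {2L(j,l), 2L(j,l)+1} and prolong along the diagonal: the cells (2j+s, 2j+s)
   receive the new symbol 2m and their old values move to row and column 2m.
   Switching a and b on a set S of {a,b}-cells of a quasigroup yields a quasigroup
   exactly when S is closed under moving along rows and columns through {a,b}-cells,
   so the minimal {a,b}-components are the classes of {a,b}-cells linked by shared
   rows and columns.  For {a,b} = {2i,2i+1} these are the m - 1 blocks
   {2j,2j+1} x {2l,2l+1} with L(j,l) = i and j <> l, plus one 6-cycle through the
   diagonal block of the row j0 with L(j0,j0) = i and through row and column 2m. *)

Section Switching.
Variables (k : nat) (a b : 'I_k).

Lemma tperm_pair u : u \in [set a; b] -> tperm a b u \in [set a; b].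
Proof. by rewrite !inE => /orP[]/eqP->; rewrite ?tpermL ?tpermR eqxx ?orbT. Qed.

Lemma tperm_pair_other u v :
  u \in [set a; b] -> v \in [set a; b] -> u != v -> tperm a b u = v.
Proof.
rewrite !inE => /orP[]/eqP-> /orP[]/eqP->; rewrite ?eqxx ?tpermL ?tpermR //.
Qed.

Variables (T : finType) (g : T -> 'I_k) (P : pred T).
Hypothesis g_inj : injective g.

Definition switch_on y := if P y then tperm a b (g y) else g y.

Lemma switch_on_inj :
  {in P, forall y, g y \in [set a; b]} ->
  (forall y y', P y -> g y' \in [set a; b] -> P y') ->
  injective switch_on.
Proof.
move=> gP P_closed y1 y2; rewrite /switch_on.
case P1: (P y1); case P2: (P y2).
- by move/(can_inj (tpermK a b))/g_inj.
- move=> E; have := P_closed y1 y2 P1; rewrite -E tperm_pair ?gP // P2.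
  by move/(_ isT).
- move=> E; have := P_closed y2 y1 P2; rewrite E tperm_pair ?gP // P1.
  by move/(_ isT).
- exact: g_inj.
Qed.

Lemma switch_on_closed y y' : injective switch_on ->
  P y -> g y \in [set a; b] -> g y' \in [set a; b] -> P y'.
Proof.
move=> sw_inj Py gy gy'; case Py': (P y') => //.
suff E : y = y' by rewrite -E Py in Py'.
apply: sw_inj; rewrite /switch_on Py Py'; apply: tperm_pair_other => //.
by apply: contraFneq Py' => /g_inj <-.
Qed.

End Switching.

Lemma quasigroupP k (f : binop k) :
  reflect ((forall x, injective (f x)) /\ (forall y, injective (f^~ y)))
          (is_quasigroup f).
Proof.
apply: (iffP andP) => [[/forallP r /forallP c] | [r c]].
  by split=> z; apply/injectiveP.
by split; apply/forallP => z; apply/injectiveP.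
Qed.

Definition share_line {T : eqType} (p q : T * T) := (p.1 == q.1) || (p.2 == q.2).

Section Components.
Variables (k : nat) (f : binop k) (a b : 'I_k).
Hypothesis f_quasi : is_quasigroup f.

Local Notation ab := [set a; b].

Lemma quasigroup_row_onto x c : exists y, f x y = c.
Proof.
have [f_inj _] := quasigroupP _ f_quasi.
by exists (invF (f_inj x) c); rewrite f_invF.
Qed.

Lemma switch_quasigroupP (S : {set 'I_k * 'I_k}) :
  reflect ((forall x, injective (switch_on a b (f x) [pred y | (x, y) \in S])) /\
           (forall y, injective (switch_on a b (f^~ y) [pred x | (x, y) \in S])))
          (is_quasigroup (switch f a b S)).
Proof.
have switchE x y : switch f a b S x y =
    if (x, y) \in S then tperm a b (f x y) else f x y.
  rewrite /switch; case: ((x, y) \in S) => //.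
  by case: tpermP => [->|->|/eqP/negbTE-> /eqP/negbTE->]; rewrite ?eqxx //; case: eqP.
apply: (iffP (quasigroupP _)) => -[r c]; split=> z;
  [apply: eq_inj (r z) _ | apply: eq_inj (c z) _ | apply: eq_inj (r z) _ | apply: eq_inj (c z) _];
  by move=> w; rewrite /switch_on /= switchE.
Qed.

Lemma component_cell (S : {set 'I_k * 'I_k}) p :
  is_component f a b S -> p \in S -> f p.1 p.2 \in ab.
Proof. by case/andP=> /eqP <- _ Sp; apply/imsetP; exists p. Qed.

Lemma component_nonempty (S : {set 'I_k * 'I_k}) :
  is_component f a b S -> exists p, p \in S.
Proof.
case/andP=> /eqP S_img _.
have /imsetP[p Sp _] : a \in [set f p.1 p.2 | p in S] by rewrite S_img !inE eqxx.
by exists p.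
Qed.

Lemma component_row_closed (S : {set 'I_k * 'I_k}) x y y' : is_component f a b S ->
  (x, y) \in S -> f x y' \in ab -> (x, y') \in S.
Proof.
move=> S_comp Sxy fxy'; have [f_inj _] := quasigroupP _ f_quasi.
have /andP[_ /switch_quasigroupP[sw_inj _]] := S_comp.
exact: (switch_on_closed (f_inj x) (sw_inj x) Sxy (component_cell S_comp Sxy) fxy').
Qed.

Lemma component_col_closed (S : {set 'I_k * 'I_k}) x x' y : is_component f a b S ->
  (x, y) \in S -> f x' y \in ab -> (x', y) \in S.
Proof.
move=> S_comp Sxy fx'y; have [_ f_inj] := quasigroupP _ f_quasi.
have /andP[_ /switch_quasigroupP[_ sw_inj]] := S_comp.
exact: (switch_on_closed (f_inj y) (sw_inj y) Sxy (component_cell S_comp Sxy) fx'y).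
Qed.

Lemma component_of_closed (P : {set 'I_k * 'I_k}) :
  {in P, forall p, f p.1 p.2 \in ab} ->
  (forall x y y', (x, y) \in P -> f x y' \in ab -> (x, y') \in P) ->
  (forall x x' y, (x, y) \in P -> f x' y \in ab -> (x', y) \in P) ->
  (exists p, p \in P) -> is_component f a b P.
Proof.
move=> P_ab row_closed col_closed [[x y] Pxy].
apply/andP; split.
  apply/eqP/setP => c; apply/imsetP/idP => [[p Pp ->]|c_ab]; first exact: P_ab.
  have [y' fxy'] := quasigroup_row_onto x c.
  by exists (x, y'); rewrite // (row_closed x y) // fxy'.
have [f_row f_col] := quasigroupP _ f_quasi.
apply/switch_quasigroupP; split=> z; apply: switch_on_inj => //.
- by move=> w Pzw; apply: (P_ab (z, w)).
- by move=> w w'; apply: row_closed.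
- by move=> w Pwz; apply: (P_ab (w, z)).
- by move=> w w'; apply: col_closed.
Qed.

Lemma component_setX_sub (S : {set 'I_k * 'I_k}) (A B : {set 'I_k}) p :
  is_component f a b S -> {in setX A B, forall q, f q.1 q.2 \in ab} ->
  p \in S -> p \in setX A B -> setX A B \subset S.
Proof.
case: p => x y S_comp AB_ab Sxy ABxy; apply/subsetP => -[x' y'] ABq.
have ABxy' : (x, y') \in setX A B.
  by move: ABxy ABq; rewrite !in_setX => /andP[-> _] /andP[_ ->].
have Sxy' := component_row_closed S_comp Sxy (AB_ab _ ABxy').
exact: component_col_closed S_comp Sxy' (AB_ab _ ABq).
Qed.

Lemma component_path_sub (S : {set 'I_k * 'I_k}) p (t : seq ('I_k * 'I_k)) :
  is_component f a b S -> {in t, forall q, f q.1 q.2 \in ab} ->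
  p \in S -> path share_line p t -> {subset t <= S}.
Proof.
move=> S_comp; elim: t p => //= q t IH [x y] t_ab Sp /andP[pq pt] r.
have Sq : q \in S.
  have : f q.1 q.2 \in ab by rewrite t_ab ?mem_head.
  rewrite [q]surjective_pairing; case/orP: pq => /eqP /= <-.
  - exact: component_row_closed S_comp Sp.
  - exact: component_col_closed S_comp Sp.
rewrite in_cons => /predU1P[-> //|]; apply: (IH q _ Sq pt) => q' tq'.
by rewrite t_ab // in_cons tq' orbT.
Qed.

Lemma component_cycle_sub (S : {set 'I_k * 'I_k}) (s : seq ('I_k * 'I_k)) p :
  is_component f a b S -> {in s, forall q, f q.1 q.2 \in ab} ->
  cycle share_line s -> p \in S -> p \in s -> {subset s <= S}.
Proof.
move=> S_comp s_ab s_cycle Sp /rot_to[i t rot_s] q.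
have /= pt : cycle share_line (p :: t) by rewrite -rot_s rot_cycle.
have t_ab : {in rcons t p, forall q, f q.1 q.2 \in ab}.
  by move=> q'; rewrite mem_rcons => sq'; rewrite s_ab // -(mem_rot i) rot_s.
rewrite -(mem_rot i) rot_s in_cons => /predU1P[-> //| tq].
by apply: (component_path_sub S_comp t_ab Sp pt); rewrite mem_rcons in_cons tq orbT.
Qed.

Lemma components_eq n (P : 'I_n -> {set 'I_k * 'I_k}) :
  (forall j, is_component f a b (P j)) ->
  (forall j S p, is_component f a b S -> p \in S -> p \in P j -> P j \subset S) ->
  (forall p, f p.1 p.2 \in ab -> exists j, p \in P j) ->
  components f a b = [set P j | j : 'I_n].
Proof.
move=> P_comp P_sub P_cover; apply/setP => S; rewrite inE; apply/andP/imsetP.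
  move=> [S_comp /forallP S_min]; have [p Sp] := component_nonempty S_comp.
  have [j Pjp] := P_cover p (component_cell S_comp Sp).
  exists j => //; apply/esym/eqP; rewrite eqEproper (P_sub j S p) //=.
  by have := S_min (P j); rewrite P_comp implybF.
move=> [j _ ->]; split=> //; apply/forallP => T; apply/implyP => T_sub.
apply/negP => T_comp; have [p Tp] := component_nonempty T_comp.
have := P_sub j T p T_comp Tp (subsetP (proper_sub T_sub) p Tp).
by move: T_sub; rewrite properE => /andP[_ /negP].
Qed.

End Components.

Definition diagonal_latin m (L : nat -> nat -> nat) :=
  [/\ forall j l, j < m -> l < m -> L j l < m,
      forall j l l', j < m -> l < m -> l' < m -> L j l = L j l' -> l = l',
      forall j j' l, j < m -> j' < m -> l < m -> L j l = L j' l -> j = j'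
    & forall j j', j < m -> j' < m -> L j j = L j' j' -> j = j'].

(* [wrap n a] is [a %% n] for [a < 2 * n]; unlike [%%] it is understood by [lia]. *)
Definition wrap n a := if a < n then a else a - n.

Lemma wrapP n a : a < 2 * n -> (a < n /\ wrap n a = a) \/ (n <= a /\ wrap n a = a - n).
Proof. by rewrite /wrap; case: ifP => ?; lia. Qed.

Ltac wrap_lia :=
  repeat match goal with
  | |- context [wrap ?n ?a] =>
      lazymatch a with context [wrap _ _] => fail | _ => idtac end;
      have := @wrapP n a; let w := fresh "w" in
      remember (wrap n a) as w eqn:Ew; clear Ew
  end; lia.

Definition cyclic_square m j l := wrap m (j + l).

Lemma cyclic_square_latin m : odd m -> diagonal_latin m (cyclic_square m).
Proof.
move=> m_odd; have {m_odd} [k ->] : exists k, m = 2 * k + 1.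
  by exists m./2; rewrite -[m in LHS]odd_double_half m_odd; lia.
by rewrite /cyclic_square; split=> [j l | j l l' | j j' l | j j']; wrap_lia.
Qed.

(* The cyclic square of odd order [n] on [(j + l + 1) mod n], prolonged along
   its transversal [j = l + 1] by the new symbol [n]. *)
Definition prolonged_cyclic_square n j l :=
  if j < n then
    if l < n then (if j == wrap n (l + 1) then n else wrap n (j + l + 1))
    else wrap n (2 * j)
  else if l < n then wrap n (2 * wrap n (l + 1)) else n.

Lemma prolonged_cyclic_square_latin n : odd n -> 1 < n ->
  diagonal_latin n.+1 (prolonged_cyclic_square n).
Proof.
move=> n_odd; have {n_odd} [k ->] : exists k, n = 2 * k + 1.
  by exists n./2; rewrite -[n in LHS]odd_double_half n_odd; lia.
rewrite /prolonged_cyclic_square => k_gt0.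
by split=> [j l | j l l' | j j' l | j j']; repeat case: ifP; wrap_lia.
Qed.

Lemma diagonal_latin_exists m : 2 < m -> exists L, diagonal_latin m L.
Proof.
move=> m_gt2; case: (boolP (odd m)) => m_odd.
  by exists (cyclic_square m); apply: cyclic_square_latin.
case: m m_gt2 m_odd => // n n_gt1 /negbNE n_odd.
by exists (prolonged_cyclic_square n); apply: prolonged_cyclic_square_latin.
Qed.

Lemma injective_lt_onto m (f : nat -> nat) :
  (forall x, x < m -> f x < m) ->
  (forall x y, x < m -> y < m -> f x = f y -> x = y) ->
  forall z, z < m -> exists2 x, x < m & f x = z.
Proof.
move=> f_lt f_inj z z_lt.
pose F (x : 'I_m) : 'I_m := Ordinal (f_lt _ (ltn_ord x)).
have F_inj : injective F by move=> x y /(congr1 val) /f_inj E; apply/val_inj/E.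
have /codomP[x /(congr1 val) /= Ez] := inj_card_onto F_inj (leqnn _) (Ordinal z_lt).
by exists x; rewrite ?Ez.
Qed.

Lemma eq_inord n (x : 'I_n.+1) k : k <= n -> (x == inord k) = (x == k :> nat).
Proof. by move=> k_le; rewrite -val_eqE /= inordK. Qed.

Section DoubledSquare.
Variables (m : nat) (L : nat -> nat -> nat).
Hypothesis L_latin : diagonal_latin m L.

Lemma latin_lt j l : j < m -> l < m -> L j l < m.
Proof. by case: L_latin => L_lt _ _ _; apply: L_lt. Qed.

Lemma latin_row_inj j l l' : j < m -> l < m -> l' < m -> L j l = L j l' -> l = l'.
Proof. by case: L_latin => _ L_row _ _; apply: L_row. Qed.

Lemma latin_col_inj j j' l : j < m -> j' < m -> l < m -> L j l = L j' l -> j = j'.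
Proof. by case: L_latin => _ _ L_col _; apply: L_col. Qed.

Lemma latin_diag_inj j j' : j < m -> j' < m -> L j j = L j' j' -> j = j'.
Proof. by case: L_latin => _ _ _ L_diag; apply: L_diag. Qed.

Lemma latin_row_onto j c : j < m -> c < m -> exists2 l, l < m & L j l = c.
Proof.
move=> j_lt; apply: injective_lt_onto => [l|l l']; first exact: latin_lt.
exact: latin_row_inj.
Qed.

(* Names every entry [L j l] of the goal and hands [lia] its range, together
   with the Latin-square axioms relating it to the entries in the same row, in
   the same column and, for a diagonal entry, on the diagonal. *)
Ltac latin_lia :=
  repeat match goal with
  | |- context [L ?j ?l] =>
      let v := fresh "v" in let E := fresh "E" in remember (L j l) as v eqn:E;
      have ? : v < m; first (rewrite E; apply: latin_lt; lia)
  end;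
  repeat match goal with
  | E1 : ?v1 = L ?j ?l, E2 : ?v2 = L ?j' ?l' |- _ =>
      tryif constr_eq v1 v2 then fail else
      lazymatch goal with
      | _ : v1 = v2 <-> _ |- _ => fail | _ : v2 = v1 <-> _ |- _ => fail | _ => idtac end;
      first
      [ constr_eq j j'; have ? : v1 = v2 <-> l = l';
          first (rewrite E1 E2; split=> [|->] //; apply: latin_row_inj; lia)
      | constr_eq l l'; have ? : v1 = v2 <-> j = j';
          first (rewrite E1 E2; split=> [|->] //; apply: latin_col_inj; lia)
      | constr_eq j l; constr_eq j' l'; have ? : v1 = v2 <-> j = j';
          first (rewrite E1 E2; split=> [|->] //; apply: latin_diag_inj; lia) ]
  end; lia.

(* Every cell of [L] becomes the 2x2 square [2 L(j,l) + (s + t) mod 2]; on the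
   diagonal blocks the entries [s = t] are replaced by the new symbol [2m] and
   the displaced values move to row and column [2m]. *)
Definition doubled x y :=
  if x < 2 * m then
    if y < 2 * m then
      if x %/ 2 == y %/ 2 then
        (if x %% 2 == y %% 2 then 2 * m else 2 * L (x %/ 2) (x %/ 2) + x %% 2)
      else 2 * L (x %/ 2) (y %/ 2) + (x + y) %% 2
    else 2 * L (x %/ 2) (x %/ 2) + (1 - x %% 2)
  else if y < 2 * m then 2 * L (y %/ 2) (y %/ 2) + y %% 2 else 2 * m.

Lemma cellP x : x <= 2 * m -> x = 2 * m \/ exists j s, [/\ j < m, s < 2 & x = 2 * j + s].
Proof.
case: (ltnP x (2 * m)) => x_lt x_le; last by left; lia.
by right; exists (x %/ 2), (x %% 2); split; lia.
Qed.

Lemma doubledE j s l t : j < m -> s < 2 -> l < m -> t < 2 ->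
  doubled (2 * j + s) (2 * l + t) =
  if j == l then (if s == t then 2 * m else 2 * L j j + s) else 2 * L j l + (s + t) %% 2.
Proof.
move=> j_lt s_lt l_lt t_lt; rewrite /doubled.
have -> : 2 * j + s < 2 * m by lia.
have -> : 2 * l + t < 2 * m by lia.
have -> : (2 * j + s) %/ 2 = j by lia.
have -> : (2 * l + t) %/ 2 = l by lia.
have -> : (2 * j + s) %% 2 = s by lia.
have -> : (2 * l + t) %% 2 = t by lia.
by have -> : (2 * j + s + (2 * l + t)) %% 2 = (s + t) %% 2 by lia.
Qed.

Lemma doubledE_col j s : j < m -> s < 2 -> doubled (2 * j + s) (2 * m) = 2 * L j j + (1 - s).
Proof.
move=> j_lt s_lt; rewrite /doubled ltnn ifT; last lia.
have -> : (2 * j + s) %/ 2 = j by lia.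
by have -> : (2 * j + s) %% 2 = s by lia.
Qed.

Lemma doubledE_row l t : l < m -> t < 2 -> doubled (2 * m) (2 * l + t) = 2 * L l l + t.
Proof.
move=> l_lt t_lt; rewrite /doubled ltnn ifT; last lia.
have -> : (2 * l + t) %/ 2 = l by lia.
by have -> : (2 * l + t) %% 2 = t by lia.
Qed.

Lemma doubledE_corner : doubled (2 * m) (2 * m) = 2 * m.
Proof. by rewrite /doubled ltnn. Qed.

Ltac cells :=
  repeat match goal with
  | H : is_true (?x <= 2 * m) |- _ => case/cellP: H => [->|[? [? [? ? ->]]]]
  end;
  rewrite ?doubledE ?doubledE_col ?doubledE_row ?doubledE_corner //;
  repeat (case: ifP => /eqP ?; try subst).

Lemma doubled_le x y : x <= 2 * m -> y <= 2 * m -> doubled x y <= 2 * m.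
Proof. by move=> x_le y_le; cells; latin_lia. Qed.

Lemma doubled_row_inj x y y' : x <= 2 * m -> y <= 2 * m -> y' <= 2 * m ->
  doubled x y = doubled x y' -> y = y'.
Proof. by move=> x_le y_le y'_le; cells; latin_lia. Qed.

Lemma doubled_col_inj x x' y : x <= 2 * m -> x' <= 2 * m -> y <= 2 * m ->
  doubled x y = doubled x' y -> x = x'.
Proof. by move=> x_le x'_le y_le; cells; latin_lia. Qed.

Local Notation N := (2 * m).+1.

Definition psi : binop N := fun x y => inord (doubled x y).

Lemma ord_le (x : 'I_N) : x <= 2 * m.
Proof. by rewrite -ltnS. Qed.

Lemma psiE x y : psi x y = doubled x y :> nat.
Proof. by rewrite /psi inordK // ltnS doubled_le ?ord_le. Qed.

Lemma psi_quasigroup : is_quasigroup psi.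
Proof.
apply/quasigroupP; split=> z w w' /(congr1 val) /=; rewrite !psiE => E; apply: val_inj.
  exact: doubled_row_inj (ord_le z) (ord_le w) (ord_le w') E.
exact: doubled_col_inj (ord_le w) (ord_le w') (ord_le z) E.
Qed.

Section Pair.
Variable j0 : nat.
Hypothesis j0_lt : j0 < m.

Definition in_pair v := (v == 2 * L j0 j0) || (v == 2 * L j0 j0 + 1).

(* The index of the component of an {a,b}-cell, read off its row: the extra
   row [2m] belongs to the 6-cycle of block [j0]. *)
Definition rowblock x := if x < 2 * m then x %/ 2 else j0.

Lemma rowblockE j s : j < m -> s < 2 -> rowblock (2 * j + s) = j.
Proof. by move=> j_lt s_lt; rewrite /rowblock ifT; lia. Qed.

Lemma rowblock_last : rowblock (2 * m) = j0.
Proof. by rewrite /rowblock ltnn. Qed.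

Lemma rowblock_lt x : x <= 2 * m -> rowblock x < m.
Proof. by rewrite /rowblock; case: ifP; lia. Qed.

Lemma in_pair_row j s l y : j < m -> j != j0 -> s < 2 -> l < m -> y <= 2 * m ->
  L j l = L j0 j0 -> in_pair (doubled (2 * j + s) y) = (y == 2 * l) || (y == 2 * l + 1).
Proof.
move=> j_lt j_ne s_lt l_lt y_le Ljl.
have l_ne : l != j.
  apply: contra j_ne => /eqP El; apply/eqP/latin_diag_inj => //.
  by rewrite -Ljl El.
by rewrite /in_pair -Ljl; cells; latin_lia.
Qed.

Lemma in_pair_row_hub s y : s < 2 -> y <= 2 * m ->
  in_pair (doubled (2 * j0 + s) y) = (y == 2 * j0 + (1 - s)) || (y == 2 * m).
Proof. by move=> s_lt y_le; rewrite /in_pair; cells; latin_lia. Qed.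

Lemma in_pair_row_last y : y <= 2 * m ->
  in_pair (doubled (2 * m) y) = (y == 2 * j0) || (y == 2 * j0 + 1).
Proof. by move=> y_le; rewrite /in_pair; cells; latin_lia. Qed.

Lemma in_pair_col l t x : l < m -> l != j0 -> t < 2 -> x <= 2 * m ->
  in_pair (doubled x (2 * l + t)) -> L (rowblock x) l = L j0 j0.
Proof.
by move=> l_lt l_ne t_lt x_le; rewrite /in_pair; cells;
  rewrite ?rowblockE ?rowblock_last //; latin_lia.
Qed.

Lemma in_pair_col_hub t x : t < 2 -> x <= 2 * m ->
  in_pair (doubled x (2 * j0 + t)) -> rowblock x = j0.
Proof.
by move=> t_lt x_le; rewrite /in_pair; cells;
  rewrite ?rowblockE ?rowblock_last //; latin_lia.
Qed.

Lemma in_pair_col_last x : x <= 2 * m -> in_pair (doubled x (2 * m)) -> rowblock x = j0.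
Proof.
by move=> x_le; rewrite /in_pair; cells; rewrite ?rowblockE ?rowblock_last //; latin_lia.
Qed.

Lemma in_pair_col_rowblock x x' y : x <= 2 * m -> x' <= 2 * m -> y <= 2 * m ->
  in_pair (doubled x y) -> in_pair (doubled x' y) -> rowblock x = rowblock x'.
Proof.
move=> x_le x'_le; case/cellP => [->|[l [t [l_lt t_lt ->]]]].
  by move=> /(in_pair_col_last x_le) -> /(in_pair_col_last x'_le) ->.
have [->|l_ne] := eqVneq l j0.
  by move=> /(in_pair_col_hub t_lt x_le) -> /(in_pair_col_hub t_lt x'_le) ->.
move=> /(in_pair_col l_lt l_ne t_lt x_le) E /(in_pair_col l_lt l_ne t_lt x'_le) E'.
by apply: (latin_col_inj (rowblock_lt x_le) (rowblock_lt x'_le) l_lt); rewrite E E'.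
Qed.

Local Notation a := (inord (2 * L j0 j0) : 'I_N).
Local Notation b := (inord (2 * L j0 j0 + 1) : 'I_N).

Lemma psi_pairE x y : (psi x y \in [set a; b]) = in_pair (doubled x y).
Proof.
have i_lt := latin_lt j0_lt j0_lt.
by rewrite !inE !eq_inord ?psiE //; lia.
Qed.

Definition piece j : {set 'I_N * 'I_N} :=
  [set p : 'I_N * 'I_N | in_pair (doubled p.1 p.2) && (rowblock p.1 == j)].

Lemma mem_piece j p : (p \in piece j) = in_pair (doubled p.1 p.2) && (rowblock p.1 == j).
Proof. by rewrite inE. Qed.

Definition hub_cycle : seq ('I_N * 'I_N) :=
  let r0 := inord (2 * j0) in let r1 := inord (2 * j0 + 1) in let e := inord (2 * m) in
  [:: (r0, r1); (r0, e); (r1, e); (r1, r0); (e, r0); (e, r1)].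

Lemma piece_block j l : j < m -> j != j0 -> l < m -> L j l = L j0 j0 ->
  piece j = setX (pairset m j) (pairset m l).
Proof.
move=> j_lt j_ne l_lt Ljl; apply/setP => -[x y].
rewrite !inE /= !eq_inord; try lia.
have [-> | [j' [s [j'_lt s_lt ->]]]] := cellP (ord_le x).
  by rewrite rowblock_last eq_sym (negbTE j_ne) andbF; lia.
rewrite rowblockE //; have [-> | j'_ne] := eqVneq j' j.
  by rewrite (in_pair_row j_lt j_ne s_lt l_lt (ord_le y) Ljl) andbT; lia.
by rewrite andbF; lia.
Qed.

Lemma piece_hub : piece j0 = [set p in hub_cycle].
Proof.
apply/setP => -[x y]; rewrite !inE /= !xpair_eqE !eq_inord; try lia.
have [-> | [j [s [j_lt s_lt ->]]]] := cellP (ord_le x).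
  by rewrite rowblock_last eqxx andbT in_pair_row_last ?ord_le //; lia.
rewrite rowblockE //; have [-> | j_ne] := eqVneq j j0.
  by rewrite andbT in_pair_row_hub ?ord_le //; lia.
by rewrite andbF; lia.
Qed.

Lemma piece_nonempty j : j < m -> exists p, p \in piece j.
Proof.
move=> j_lt; have [y Ey] := quasigroup_row_onto psi_quasigroup (inord (2 * j)) a.
exists (inord (2 * j), y); rewrite mem_piece -psi_pairE Ey !inE eqxx /= inordK; last lia.
by rewrite -[2 * j]addn0 rowblockE.
Qed.

Lemma piece_component j : j < m -> is_component psi a b (piece j).
Proof.
move=> j_lt; apply: (component_of_closed psi_quasigroup); last exact: piece_nonempty.
- by move=> p; rewrite mem_piece psi_pairE => /andP[].
- by move=> x y y'; rewrite !mem_piece psi_pairE /= => /andP[_ ->] ->.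
- move=> x x' y; rewrite !mem_piece psi_pairE /= => /andP[Dxy /eqP <-] Dx'y.
  by rewrite Dx'y (in_pair_col_rowblock (ord_le x') (ord_le x) (ord_le y) Dx'y Dxy) eqxx.
Qed.

Lemma piece_sub j S p : j < m -> is_component psi a b S ->
  p \in S -> p \in piece j -> piece j \subset S.
Proof.
move=> j_lt S_comp Sp Pp.
have P_ab : {in piece j, forall q, psi q.1 q.2 \in [set a; b]}.
  by move=> q; rewrite mem_piece psi_pairE => /andP[].
have [Ej | j_ne] := eqVneq j j0.
  rewrite Ej piece_hub in Pp P_ab *; apply/subsetP => q; rewrite inE.
  apply: (component_cycle_sub (s := hub_cycle) psi_quasigroup S_comp _ _ Sp).
  - by move=> q' hq'; apply: P_ab; rewrite inE.
  - by rewrite /= /share_line /= !eqxx ?orbT.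
  - by rewrite inE in Pp.
have [l l_lt Ljl] := latin_row_onto j_lt (latin_lt j0_lt j0_lt).
rewrite (piece_block j_lt j_ne l_lt Ljl) in Pp P_ab *.
exact: (component_setX_sub psi_quasigroup S_comp P_ab Sp Pp).
Qed.

Lemma piece_inj j j' : piece j = piece j' -> j < m -> j = j'.
Proof.
move=> E /piece_nonempty[p Pp]; have := Pp; rewrite E mem_piece => /andP[_ /eqP <-].
by move: Pp; rewrite mem_piece => /andP[_ /eqP ->].
Qed.

Lemma piece_hub_not_block : ~ is_block (piece j0).
Proof.
move=> [J [l E]]; have l_lt := ltn_ord l; have J_lt := ltn_ord J.
have : (inord (2 * j0), inord (2 * m)) \in piece j0 by rewrite piece_hub inE /= !inE eqxx orbT.
rewrite E in_setX !inE !eq_inord /= ?inordK; lia.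
Qed.

Lemma piece_is_block j : j < m -> j != j0 -> is_block (piece j).
Proof.
move=> j_lt j_ne; have [l l_lt Ljl] := latin_row_onto j_lt (latin_lt j0_lt j0_lt).
by exists (Ordinal j_lt), (Ordinal l_lt); apply: piece_block.
Qed.

Lemma psi_components :
  #|components psi a b| = m /\
  exists2 C0, C0 \in components psi a b &
    ~ is_block C0 /\ forall C, C \in components psi a b -> C != C0 -> is_block C.
Proof.
have comps : components psi a b = [set piece j | j : 'I_m].
  apply: components_eq => [j | j S p | p D].
  - exact: piece_component.
  - exact: piece_sub.
  - by exists (Ordinal (rowblock_lt (ord_le p.1))); rewrite mem_piece -psi_pairE D eqxx.
split.
  rewrite comps card_imset ?card_ord // => j j' E.
  exact/val_inj/(piece_inj E (ltn_ord j)).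
exists (piece j0); first by rewrite comps; apply/imsetP; exists (Ordinal j0_lt).
split=> [|C]; first exact: piece_hub_not_block.
rewrite comps => /imsetP[j _ ->] j_ne; apply: piece_is_block => //.
by apply: contraNneq j_ne => ->.
Qed.

End Pair.

End DoubledSquare.

Theorem proposition5 (m : nat) (hm : 3 <= m) :
  exists psi : binop (2 * m).+1,
    is_quasigroup psi /\
    forall i : 'I_m,
      let a : 'I_(2 * m).+1 := inord (2 * i) in
      let b : 'I_(2 * m).+1 := inord (2 * i + 1) in
      #|components psi a b| = m /\
      exists2 C0, C0 \in components psi a b &
        ~ is_block C0 /\
        forall C, C \in components psi a b -> C != C0 -> is_block C.
Proof.
have [L L_latin] := diagonal_latin_exists hm.
exists (psi L); split=> [|i]; first exact: psi_quasigroup.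
have [j0 j0_lt <-] : exists2 j0, j0 < m & L j0 j0 = i.
  apply: injective_lt_onto (ltn_ord i) => j j_lt; first exact: latin_lt.
  exact: latin_diag_inj.
exact: psi_components.
Qed.
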